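(* Let $t,\ell,s\geq 1$ be integers and $\varepsilon,\delta\in(0,1)$. Let $\mathcal{H}$ be a $t$-uniform $(\varepsilon,\delta)$-superspread hypergraph and let $\mathfrak{B}$ be a collection of ordered $\ell$-tuples of distinct vertices of $\mathcal{H}$ such that for any $v_1,\dots,v_{\ell-1}\in V(\mathcal{H})$ there are at most $s$ vertices $v_\ell$ with $(v_1,\dots,v_\ell)\in\mathfrak{B}$. Then at most $(\varepsilon+t!\,s\,\delta)\,e(\mathcal{H})$ edges of $\mathcal{H}$ contain (all the vertices of) some tuple of $\mathfrak{B}$.
   Context: For $S\subseteq V(\mathcal{H})$, $\deg_{\mathcal{H}}(S)=|\{e\in E(\mathcal{H}): S\subseteq e\}|$. An edge $e$ is $\delta$-heavy if there exist $S\subseteq e$ and $v\in e\setminus S$ with $\deg_{\mathcal{H}}(S\cup\{v\})\geq\delta\deg_{\mathcal{H}}(S)$; otherwise it is $\delta$-light. $\mathcal{H}$ is $(\varepsilon,\delta)$-superspread if at most $\varepsilon\,e(\mathcal{H})$ of its edges are $\delta$-heavy. *)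

From mathcomp Require Import all_boot all_order all_algebra.
Set Implicit Arguments. Unset Strict Implicit. Unset Printing Implicit Defensive.
Import Order.TTheory GRing.Theory Num.Theory.
Local Open Scope ring_scope.

(* A hypergraph on a finite vertex type V is its edge set H : {set {set V}}. *)

Definition hdeg (V : finType) (H : {set {set V}}) (S : {set V}) : nat :=
  #|[set e in H | S \subset e]|.

Definition uniform (V : finType) (t : nat) (H : {set {set V}}) : Prop :=
  forall e, e \in H -> #|e| = t.

Definition heavy (R : realFieldType) (V : finType) (H : {set {set V}})
  (delta : R) (e : {set V}) : bool :=
  [exists S : {set V}, (S \subset e) &&
    [exists v in e :\: S, delta * (hdeg H S)%:R <= (hdeg H (v |: S))%:R]].

Definition superspread (R : realFieldType) (V : finType) (H : {set {set V}})
  (eps delta : R) : Prop :=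
  (#|[set e in H | heavy H delta e ]|)%:R <= eps * (#|H|)%:R.

Definition contains_tuple (V : finType) (l : nat) (B : {set l.-tuple V})
  (e : {set V}) : bool :=
  [exists b in B, all (fun x => x \in e) b].

(** If an edge [e] is light and contains the vertices of a tuple [rcons p v] of
    [B], then [deg(p ∪ {v}) < δ deg(p)].  Hence the light edges containing a
    tuple of [B] number at most [Σ deg(p ∪ {v}) ≤ δ Σ deg(p)], the sums running
    over the tuples [rcons p v] of [B].  Each prefix [p] has at most [s]
    extensions [v], and each edge contains at most [t!] tuples of distinct
    vertices, so [Σ deg(p) ≤ s t! e(H)].  The heavy edges add at most [ε e(H)]. *)

From mathcomp Require Import all_boot all_order all_algebra.
Import Order.TTheory GRing.Theory Num.Theory.
Set Implicit Arguments. Unset Strict Implicit.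

Lemma ffact_leq_fact n m : n ^_ m <= n`!.
Proof.
have [le_mn | lt_nm] := leqP m n; last by rewrite ffact_small.
by rewrite -(ffact_fact le_mn) leq_pmulr ?fact_gt0.
Qed.

Lemma sum_pair_le_fibre (I J : finType) (P : pred (I * J)) (Q : pred I)
    (w : I -> nat) s :
  (forall i, #|[set j | P (i, j)]| <= s) -> (forall i j, P (i, j) -> Q i) ->
  \sum_(ij | P ij) w ij.1 <= s * \sum_(i | Q i) w i.
Proof.
move=> fibre_le PQ.
rewrite (eq_bigl (fun ij => P (ij.1, ij.2))) => [|[]//].
rewrite -(pair_big_dep xpredT (fun i j => P (i, j)) (fun i _ => w i)) /=.
rewrite big_distrr /= [X in _ <= X]big_mkcond /=.
apply: leq_sum => i _; rewrite sum_nat_const.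
have [Qi | nQi] := boolP (Q i).
  by rewrite leq_mul2r (leq_trans _ (fibre_le i)) ?orbT // subset_leq_card //;
    apply/subsetP => j; rewrite !inE.
suff -> : #|[pred j | P (i, j)]| = 0 by [].
by apply: eq_card0 => j; rewrite !inE; apply: contraNF nQi => /PQ.
Qed.

Section Degrees.

Variables (V : finType) (H : {set {set V}}).

Lemma hdegE S : hdeg H S = \sum_(e in H) (S \subset e : nat).
Proof.
rewrite /hdeg -sum1_card big_mkcond [RHS]big_mkcond /=.
by apply: eq_bigr => e _; rewrite inE; case: (e \in H); case: (S \subset e).
Qed.

Lemma card_edges_containing_le_sum_hdeg (I : finType) (P : pred I)
    (F : I -> {set V}) :
  #|[set e in H | [exists i, P i && (F i \subset e)]]|
    <= \sum_(i | P i) hdeg H (F i).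
Proof.
under eq_bigr do rewrite hdegE.
rewrite exchange_big /= -sum1_card big_mkcond [X in _ <= X]big_mkcond /=.
apply: leq_sum => e _; rewrite inE.
case: (e \in H) => //=; case: existsP => // -[i /andP[Pi Fie]].
by rewrite (bigD1 i) //= Fie.
Qed.

Lemma card_uniq_tuples_sub k (e : {set V}) :
  #|[set p : k.-tuple V | uniq p & [set:: p] \subset e]| <= #|e|`!.
Proof.
have -> : [set p : k.-tuple V | uniq p & [set:: p] \subset e]
        = [set p : k.-tuple V | all [in e] p & uniq p].
  apply/setP => p; rewrite !inE andbC; congr (_ && _).
  by apply/subsetP/allP => sub x; have := sub x; rewrite inE.
by rewrite card_uniq_tuples (@eq_card _ _ e) ?ffact_leq_fact.
Qed.

Lemma sum_hdeg_uniq_tuples t k :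
  uniform t H ->
  \sum_(p : k.-tuple V | uniq p) hdeg H [set:: p] <= t`! * #|H|.
Proof.
move=> Ht; under eq_bigr do rewrite hdegE.
rewrite exchange_big /= mulnC -sum1_card big_distrl /=.
apply: leq_sum => e He; rewrite mul1n -(Ht e He).
apply: leq_trans (card_uniq_tuples_sub k e).
rewrite -sum1_card big_mkcond [X in _ <= X]big_mkcond /=.
by apply: leq_sum => p _; rewrite inE; case: (uniq p); case: subset.
Qed.

End Degrees.

Section TupleSplits.

Variables (V : finType) (l : nat) (B : {set l.-tuple V}).
Hypothesis B_uniq : forall b, b \in B -> uniq b.

Definition rcons_in (pv : (l.-1).-tuple V * V) : bool :=
  [exists b in B, val b == rcons pv.1 pv.2].

Lemma rcons_in_uniq p v : rcons_in (p, v) -> (v \notin val p) && uniq p.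
Proof.
by case/existsP => b /andP[/B_uniq + /eqP b_pv]; rewrite b_pv rcons_uniq.
Qed.

Lemma contains_tuple_rcons_in e :
  (0 < l)%N -> contains_tuple B e ->
  exists2 pv, rcons_in pv & pv.2 |: [set:: val pv.1] \subset e.
Proof.
move=> l_gt0 /existsP[b /andP[bB b_sub_e]].
case/lastP E: (val b) => [|p v].
  by move: (size_tuple b); rewrite E => l0; rewrite -l0 in l_gt0.
have size_p : size p == l.-1 by rewrite -(size_tuple b) E size_rcons.
exists (Tuple size_p, v).
  by apply/existsP; exists b; rewrite bB E /=.
apply/subsetP => x; rewrite in_setU1 inE => /predU1P x_pv.
by apply: (allP b_sub_e); rewrite E mem_rcons in_cons; apply/predU1P.
Qed.

End TupleSplits.

Local Open Scope ring_scope.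

Lemma light_hdeg_extension (R : realFieldType) (V : finType)
    (H : {set {set V}}) (delta : R) (e S : {set V}) (v : V) :
  ~~ heavy H delta e -> S \subset e -> v \in e :\: S ->
  (hdeg H (v |: S))%:R < delta * (hdeg H S)%:R.
Proof.
move=> light Se vSe; rewrite ltNge; apply: contra light => deg_ge.
by apply/existsP; exists S; rewrite Se; apply/existsP; exists v; rewrite vSe.
Qed.

Lemma card_light_edges_containing_tuple (R : realFieldType) (V : finType)
    (H : {set {set V}}) (delta : R) l (B : {set l.-tuple V}) :
  (forall b, b \in B -> uniq b) -> 0 <= delta -> (0 < l)%N ->
  (#|[set e in H | contains_tuple B e & ~~ heavy H delta e]|)%:R
    <= delta * (\sum_(pv | rcons_in B pv) hdeg H [set:: val pv.1])%:R.
Proof.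
move=> B_uniq delta_ge0 l_gt0.
pose F (pv : (l.-1).-tuple V * V) := pv.2 |: [set:: val pv.1].
pose P pv := rcons_in B pv &&
  [exists e in H, ~~ heavy H delta e && (F pv \subset e)].
have light_ext pv : P pv ->
    (hdeg H (F pv))%:R <= delta * (hdeg H [set:: val pv.1])%:R.
  case: pv => p v /andP[Bpv /existsP[e /and3P[_ light Fe]]].
  apply/ltW/(light_hdeg_extension light (subset_trans (subsetUr _ _) Fe)).
  have /andP[v_notin_p _] := rcons_in_uniq B_uniq Bpv.
  by rewrite in_setD inE v_notin_p (subsetP Fe) ?setU11.
have cover : [set e in H | contains_tuple B e & ~~ heavy H delta e]
    \subset [set e in H | [exists pv, P pv && (F pv \subset e)]].
  apply/subsetP => e; rewrite !inE => /and3P[He /(contains_tuple_rcons_in l_gt0)].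
  case=> pv Bpv Fe light; rewrite He; apply/existsP; exists pv.
  by rewrite /P Bpv Fe andbT; apply/existsP; exists e; rewrite He light Fe.
apply: le_trans (_ : (\sum_(pv | P pv) hdeg H (F pv))%:R <= _).
  by rewrite ler_nat (leq_trans (subset_leq_card cover))
    ?card_edges_containing_le_sum_hdeg.
rewrite natr_sum (le_trans (ler_sum _ light_ext)) // -mulr_sumr -natr_sum.
apply: ler_wpM2l => //; rewrite ler_nat big_mkcond [X in (_ <= X)%N]big_mkcond.
by apply: leq_sum => pv _; case: ifP => [/andP[-> _] | _].
Qed.

Theorem proposition2p7 (R : realFieldType) (V : finType) (t l s : nat)
  (eps delta : R) (H : {set {set V}}) (B : {set l.-tuple V}) :
  (1 <= t)%N -> (1 <= l)%N -> (1 <= s)%N ->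
  0 < eps < 1 -> 0 < delta < 1 ->
  uniform t H ->
  superspread H eps delta ->
  (forall b, b \in B -> uniq b) ->
  (forall p : (l.-1).-tuple V,
      (#|[set v : V | [exists b in B, val b == rcons p v]]| <= s)%N) ->
  (#|[set e in H | contains_tuple B e]|)%:R
    <= (eps + (t`!)%:R * s%:R * delta) * (#|H|)%:R.
Proof.
move=> _ l_gt0 _ _ /andP[delta_gt0 _] Ht heavy_few B_uniq fibre_le.
set heavyE := [set e in H | heavy H delta e].
set lightC := [set e in H | contains_tuple B e & ~~ heavy H delta e].
have split_C : (#|[set e in H | contains_tuple B e]| <= #|heavyE| + #|lightC|)%N.
  apply: leq_trans (leq_card_setU _ _); apply: subset_leq_card.
  apply/subsetP => e; rewrite !inE.
  by case: (e \in H); case: heavy; case: contains_tuple.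
have prefix_sum : (\sum_(pv | rcons_in B pv) hdeg H [set:: val pv.1]
    <= s * (t`! * #|H|))%N.
  apply: leq_trans (leq_mul (leqnn s) (sum_hdeg_uniq_tuples (l.-1) Ht)).
  apply: (sum_pair_le_fibre _ fibre_le) => p v /(rcons_in_uniq B_uniq).
  by case/andP.
apply: le_trans (_ : (#|heavyE| + #|lightC|)%:R <= _); first by rewrite ler_nat.
rewrite natrD mulrDl lerD //.
apply: le_trans (card_light_edges_containing_tuple H B_uniq (ltW delta_gt0) l_gt0) _.
rewrite [_ * _ * delta]mulrC -mulrA -!natrM ler_pM2l // ler_nat.
by rewrite -mulnA mulnCA.
Qed.
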